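(* Let $\mathbb F\subseteq\mathbb D$ be a finite subset of local height $n$. Then for all Banach spaces $X,Y$ and all bounded linear operators $T:X\to Y$, $$\tau(T|\mathcal H(\mathbb F))\le\tau(T|\mathcal H(\mathbb D_1^n)).$$
   Context: Dyadic intervals: $\Delta_k^{(j)}:=[\frac{j-1}{2^k},\frac{j}{2^k})$ for $k\ge0$ (so $\Delta_0^{(1)}=[0,1)$). Haar functions: for $k\ge1$, integer $j$, $\chi_k^{(j)}(t)=+2^{(k-1)/2}$ on $\Delta_k^{(2j-1)}$, $-2^{(k-1)/2}$ on $\Delta_k^{(2j)}$, $0$ otherwise, $t\in[0,1)$. Dyadic tree $\mathbb D:=\{(k,j):k=1,2,\dots;\ j=1,\dots,2^{k-1}\}$; $\mathbb D_m^n:=\{(k,j):k=m,\dots,n;\ j=1,\dots,2^{k-1}\}$. Branches: for $t\in[0,1)$, $\mathbb B(t):=\{(k,j)\in\mathbb D: t\in\Delta_{k-1}^{(j)}\}$. Local height of finite $\mathbb F\subseteq\mathbb D$: $\mathrm{lh}(\mathbb F):=\max_{t\in[0,1)}|\mathbb F\cap\mathbb B(t)|$. For finite $\mathbb F\subseteq\mathbb D$ and bounded linear $T:X\to Y$, $\tau(T|\mathcal H(\mathbb F))$ is the least $c\ge0$ such that $\|\sum_{(k,j)\in\mathbb F}Tx_k^{(j)}\chi_k^{(j)}|L_2\|\le c(\sum_{(k,j)\in\mathbb F}\|x_k^{(j)}\|^2)^{1/2}$ for all $x_k^{(j)}\in X$, where $\|\cdot|L_2\|$ is the Bochner $L_2([0,1),Y)$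 norm. *)

From HB Require Import structures.
From mathcomp Require Import all_boot all_order all_algebra.
From mathcomp Require Import all_classical all_reals all_analysis.
Set Implicit Arguments. Unset Strict Implicit. Unset Printing Implicit Defensive.
Import Order.TTheory GRing.Theory Num.Theory numFieldNormedType.Exports.
Local Open Scope classical_set_scope.
Local Open Scope ring_scope.

Section Haar.
Variable R : realType.

Definition in_dyadic (k j : nat) (t : R) : bool :=
  ((j%:R - 1) / 2 ^+ k <= t) && (t < j%:R / 2 ^+ k).

Definition haar (k j : nat) (t : R) : R :=
  if in_dyadic k (2 * j - 1) t then Num.sqrt (2 ^+ (k - 1))
  else if in_dyadic k (2 * j) t then - Num.sqrt (2 ^+ (k - 1))
  else 0.

Definition inD (p : nat * nat) : bool := (1 <= p.1)%N && (1 <= p.2 <= 2 ^ (p.1 - 1))%N.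

Definition Dmn (m n : nat) : seq (nat * nat) :=
  flatten [seq [seq (k, j) | j <- iota 1 (2 ^ (k - 1))] | k <- iota m (n.+1 - m)].

Definition in_branch (t : R) (p : nat * nat) : bool := inD p && in_dyadic (p.1 - 1) p.2 t.

(* lh(F) = n  (F a finite subset of D given as a duplicate-free list) *)
Definition local_height_eq (F : seq (nat * nat)) (n : nat) : Prop :=
  (exists2 t : R, 0 <= t < 1 & count (in_branch t) F = n) /\
  (forall t : R, 0 <= t < 1 -> (count (in_branch t) F <= n)%N).

Definition L2norm (Y : normedModType R) (f : R -> Y) : R :=
  Num.sqrt (fine (\int[@lebesgue_measure R]_(t in `[0%R, 1%R[) ((`|f t| ^+ 2)%:E))%E).

Definition haar_sum (X Y : normedModType R) (T : X -> Y) (F : seq (nat * nat))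
  (x : nat * nat -> X) : R -> Y :=
  fun t => \sum_(p <- F) haar p.1 p.2 t *: T (x p).

Definition tau_admissible (X Y : normedModType R) (T : X -> Y) (F : seq (nat * nat))
  (c : R) : Prop :=
  0 <= c /\ forall x : nat * nat -> X,
    L2norm (haar_sum T F x) <= c * Num.sqrt (\sum_(p <- F) `|x p| ^+ 2).

Definition tau (X Y : normedModType R) (T : X -> Y) (F : seq (nat * nat)) : \bar R :=
  ereal_inf [set c%:E | c in tau_admissible T F].

End Haar.

From HB Require Import structures.
From mathcomp Require Import all_boot all_order all_algebra.
From mathcomp Require Import all_classical all_reals all_analysis.
From mathcomp Require Import ring lra zify.
Import Order.TTheory GRing.Theory Num.Theory numFieldNormedType.Exports.
Local Open Scope ring_scope.
Set Implicit Arguments. Unset Strict Implicit. Unset Printing Implicit Defensive.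

(* On the left half of [0, 1), after the substitution t = s / 2, a Haar polynomial
   [sum_F chi_k^(j) T x_k^(j)] equals the constant [T x_1^(1)] (when the root (1, 1)
   lies in F) plus a Haar polynomial over the left subtree of F, reindexed as a subset
   of D, with coefficients multiplied by sqrt 2; the right half is symmetric, with
   [- T x_1^(1)]. Both subtrees have local height n - 1 if the root is in F, and n
   otherwise. Carrying an extra constant v along, induction on the depth of F shows that
   the pair (||v + Haar polynomial||^2, sum_F ||x||^2) is a convex combination of the
   same pairs for D_1^n and suitable coefficient families: if the root is in F one
   grafts the families of the two subtrees under a common root, otherwise one averages
   them. Hence every constant admissible for D_1^n is admissible for F. All the L_2
   norms are finite sums, since a Haar polynomial is constant on the dyadic intervals
   of its deepest level. *)

Lemma big_pred1_uniq (V : Type) (idx : V) (op : Monoid.law idx) (I : eqType)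
    (r : seq I) (a : I) (f : I -> V) :
  uniq r -> \big[op/idx]_(i <- r | i == a) f i = if a \in r then f a else idx.
Proof.
elim: r => [|b r IH] /=; first by rewrite big_nil.
case/andP => br ur; rewrite big_cons IH // in_cons.
by case: (eqVneq b a) => [<-|] //=; rewrite (negbTE br) Monoid.mulm1.
Qed.

Lemma count_sum_nat (T : Type) (a : pred T) (r : seq T) :
  count a r = (\sum_(x <- r) (a x : nat))%N.
Proof. by rewrite -sumn_count sumnE big_map. Qed.

Section ConvexSums.
Variable R : fieldType.

Lemma convex_sumDr (I : Type) (r : seq I) (w P : I -> R) (c : R) :
  \sum_(i <- r) w i = 1 -> \sum_(i <- r) w i * (P i + c) = \sum_(i <- r) w i * P i + c.
Proof.
by move=> w1; under eq_bigr do rewrite mulrDr; rewrite big_split /= -mulr_suml w1 mul1r.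
Qed.

Lemma convex_sum_pairs (I J : Type) (r : seq I) (r' : seq J) (w : I -> R) (w' : J -> R)
    (P : I -> R) (Q : J -> R) :
  \sum_(i <- r) w i = 1 -> \sum_(j <- r') w' j = 1 ->
  \sum_(i <- r) \sum_(j <- r') (w i * w' j) * ((P i + Q j) / 2) =
  (\sum_(i <- r) w i * P i + \sum_(j <- r') w' j * Q j) / 2.
Proof.
move=> w1 w'1.
have e i j : w i * w' j * ((P i + Q j) / 2) = w i * P i / 2 * w' j + w i * (w' j * Q j / 2).
  by ring.
under eq_bigr do under eq_bigr do rewrite e.
under eq_bigr do rewrite big_split /= -!mulr_sumr w'1 mulr1.
by rewrite big_split /= -!mulr_suml w1 mul1r mulrDl.
Qed.

End ConvexSums.

Section StepIntegral.
Local Open Scope classical_set_scope.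
Context d (S : measurableType d) (R : realType) (mu : {measure set S -> \bar R}).

Lemma integral_step (I : eqType) (r : seq I) (A : I -> set S) (g : S -> R) (c : I -> R) :
  (forall i, measurable (A i)) -> uniq r -> trivIset [set` r] A ->
  (forall i t, A i t -> g t = c i) -> (forall t, 0 <= g t) ->
  (\int[mu]_(t in \big[setU/set0]_(i <- r) A i) (g t)%:E =
   \sum_(i <- r) (c i)%:E * mu (A i))%E.
Proof.
move=> mA ur tA gA g0; rewrite ge0_integral_bigsetU //.
- apply: eq_bigr => i _; rewrite -integral_cst //.
  by apply: eq_integral => t; rewrite inE => /gA ->.
- elim: r {ur tA} => [|i r IH]; first by rewrite big_nil; exact: measurable_fun_set0.
  rewrite big_cons measurable_funU //; last exact: bigsetU_measurable.
  split => // _ B mB.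
  rewrite (_ : _ `&` _ = A i `&` cst (c i)%:E @^-1` B).
    by rewrite preimage_cst; case: ifPn => _; rewrite ?setIT ?setI0.
  by apply/seteqP; split => t [Ait]; rewrite /= (gA _ _ Ait).
by move=> t _; rewrite lee_fin.
Qed.

End StepIntegral.

Section DyadicIntervals.
Variable R : realType.
Implicit Types t : R.

Lemma pow2_gt0 (k : nat) : 0 < (2 : R) ^+ k.
Proof. by rewrite exprn_gt0. Qed.

Lemma le_dyadic_atom (N a i : nat) t :
  i%:R / 2 ^+ N <= t -> t < i.+1%:R / 2 ^+ N ->
  (a%:R / 2 ^+ N <= t) = (a <= i)%N.
Proof.
move=> lit ltS; have p := pow2_gt0 N.
apply/idP/idP => h.
  have : a%:R / 2 ^+ N < i.+1%:R / 2 ^+ N :> R by apply: le_lt_trans ltS.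
  by rewrite ltr_pM2r ?invr_gt0 // ltr_nat ltnS.
by apply: le_trans lit; rewrite ler_pM2r ?invr_gt0 // ler_nat.
Qed.

Lemma lt_dyadic_atom (N a i : nat) t :
  i%:R / 2 ^+ N <= t -> t < i.+1%:R / 2 ^+ N ->
  (t < a%:R / 2 ^+ N) = (i < a)%N.
Proof.
move=> lit ltS; have p := pow2_gt0 N.
apply/idP/idP => h.
  have : i%:R / 2 ^+ N < a%:R / 2 ^+ N :> R by apply: le_lt_trans h.
  by rewrite ltr_pM2r ?invr_gt0 // ltr_nat.
by apply: (lt_le_trans ltS); rewrite ler_pM2r ?invr_gt0 // ler_nat.
Qed.

Lemma dyadic_refine (a k N : nat) : (k <= N)%N ->
  a%:R / 2 ^+ k = (a * 2 ^ (N - k))%:R / 2 ^+ N :> R.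
Proof.
move=> kN; rewrite natrM natrX -{2}(subnKC kN) exprD.
by field; rewrite !gt_eqF ?pow2_gt0.
Qed.

Lemma in_dyadic_atom (N k m i : nat) t : (k <= N)%N ->
  i%:R / 2 ^+ N <= t -> t < i.+1%:R / 2 ^+ N ->
  in_dyadic k m t = ((m.-1 * 2 ^ (N - k) <= i) && (i < m * 2 ^ (N - k)))%N.
Proof.
move=> kN lit ltS; rewrite /in_dyadic.
case: m => [|m].
  have t0 : 0 <= t by apply: le_trans lit; rewrite divr_ge0 // ltW // pow2_gt0.
  by rewrite mul0n ltn0 andbF mul0r ltNge t0 andbF.
have -> : m.+1%:R - 1 = m%:R :> R by rewrite -natr1 addrK.
rewrite (dyadic_refine m kN) (dyadic_refine m.+1 kN) /=.
by rewrite (le_dyadic_atom _ lit ltS) (lt_dyadic_atom _ lit ltS).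
Qed.

Lemma haar_atom_const (N k j i : nat) t : (k <= N)%N ->
  i%:R / 2 ^+ N <= t -> t < i.+1%:R / 2 ^+ N ->
  haar k j t = haar k j (i%:R / 2 ^+ N).
Proof.
move=> kN lit ltS.
have ltS' : i%:R / 2 ^+ N < i.+1%:R / 2 ^+ N :> R.
  by rewrite ltr_pM2r ?invr_gt0 ?pow2_gt0 // ltr_nat.
by rewrite /haar !(in_dyadic_atom _ kN lit ltS) !(in_dyadic_atom _ kN (lexx _) ltS').
Qed.

End DyadicIntervals.

Section DyadicStepIntegral.
Local Open Scope classical_set_scope.
Variable R : realType.

Definition dyadic_atom (N i : nat) : set R := `[i%:R / 2 ^+ N, i.+1%:R / 2 ^+ N[.

Lemma dyadic_atomP N i (t : R) :
  dyadic_atom N i t <-> i%:R / 2 ^+ N <= t /\ t < i.+1%:R / 2 ^+ N.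
Proof. by rewrite /dyadic_atom /= in_itv /=; split => [/andP[]|[-> ->]]. Qed.

Lemma bigsetU_dyadic_atom N :
  \big[setU/set0]_(i <- index_iota 0 (2 ^ N)) dyadic_atom N i = `[0%R, 1%R[.
Proof.
have p := pow2_gt0 R N.
rewrite -bigcup_seq; apply/seteqP; split => t.
  move=> [i]; rewrite /= mem_iota add0n subn0 => /andP[_ iN] /dyadic_atomP[it ti].
  rewrite in_itv /= (le_trans _ it) ?divr_ge0 ?(ltW p) //=.
  by rewrite (lt_le_trans ti) // ler_pdivrMr // mul1r -natrX ler_nat.
rewrite /= in_itv /= => /andP[t0 t1].
have /andP[lo hi] := truncn_itv (mulr_ge0 t0 (ltW p)).
exists (Num.truncn (t * 2 ^+ N)).
  rewrite /= mem_iota add0n subn0 leq0n /= -(ltr_nat R) natrX.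
  by rewrite (le_lt_trans lo) // -[X in _ < X]mul1r ltr_pM2r.
by apply/dyadic_atomP; rewrite ler_pdivrMr // ltr_pdivlMr.
Qed.

Lemma trivIset_dyadic_atom N : trivIset [set` index_iota 0 (2 ^ N)] (dyadic_atom N).
Proof.
move=> i j _ _ [t [/dyadic_atomP[it ti] /dyadic_atomP[jt tj]]].
have := le_dyadic_atom i jt tj; rewrite it => /esym ij.
have := le_dyadic_atom j it ti; rewrite jt => /esym ji.
by apply/eqP; rewrite eqn_leq ij ji.
Qed.

Lemma lebesgue_measure_dyadic_atom N i :
  lebesgue_measure (dyadic_atom N i) = (2 ^+ N)^-1%:E.
Proof.
have p := pow2_gt0 R N.
rewrite lebesgue_measure_itv /= lte_fin ltr_pM2r ?invr_gt0 // ltr_nat ltnSn -EFinB.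
by congr EFin; rewrite -natr1; field; rewrite gt_eqF.
Qed.

Lemma integral_dyadic_step N (g : R -> R) : (forall t, 0 <= g t) ->
  (forall i t, i%:R / 2 ^+ N <= t -> t < i.+1%:R / 2 ^+ N -> g t = g (i%:R / 2 ^+ N)) ->
  (\int[lebesgue_measure]_(t in `[0%R, 1%R[) (g t)%:E =
   ((\sum_(i < 2 ^ N) g (i%:R / 2 ^+ N)) / 2 ^+ N)%:E)%E.
Proof.
move=> g0 gc; rewrite -(bigsetU_dyadic_atom N).
rewrite (integral_step _ (c := fun i => g (i%:R / 2 ^+ N))).
- rewrite (eq_bigr (fun i => (g (i%:R / 2 ^+ N) / 2 ^+ N)%:E)) => [|i _].
    by rewrite sumEFin big_mkord mulr_suml.
  by rewrite EFinM; congr (_ * _)%E; exact: lebesgue_measure_dyadic_atom.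
- by move=> i; exact: measurable_itv.
- exact: iota_uniq.
- exact: trivIset_dyadic_atom.
- by move=> i t /dyadic_atomP[]; exact: gc.
- exact: g0.
Qed.

End DyadicStepIntegral.

Section HaarSelfSimilarity.
Variable R : realType.
Implicit Types s : R.

Lemma ler_half (x y : R) : (x / 2 <= y / 2) = (x <= y).
Proof. by rewrite ler_pM2r ?invr_gt0. Qed.

Lemma ltr_half (x y : R) : (x / 2 < y / 2) = (x < y).
Proof. by rewrite ltr_pM2r ?invr_gt0. Qed.

Lemma contrL_itv s : 0 <= s < 1 -> 0 <= s / 2 < 1.
Proof. by move=> /andP[? ?]; apply/andP; split; lra. Qed.

Lemma contrR_itv s : 0 <= s < 1 -> 0 <= (s + 1) / 2 < 1.
Proof. by move=> /andP[? ?]; apply/andP; split; lra. Qed.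

Lemma in_dyadic_contrL (k m : nat) s :
  in_dyadic k.+1 m (s / 2) = in_dyadic k m s.
Proof.
have e a : a / 2 ^+ k.+1 = (a / 2 ^+ k) / 2 :> R.
  by rewrite exprS; field; rewrite gt_eqF ?pow2_gt0.
by rewrite /in_dyadic !e ler_half ltr_half.
Qed.

Lemma in_dyadic_contrR (k m : nat) s :
  in_dyadic k.+1 (m + 2 ^ k) ((s + 1) / 2) = in_dyadic k m s.
Proof.
have e a : (a + (2 ^ k)%:R) / 2 ^+ k.+1 = (a / 2 ^+ k + 1) / 2 :> R.
  by rewrite natrX exprS; field; rewrite gt_eqF ?pow2_gt0.
by rewrite /in_dyadic natrD addrAC !e ler_half ltr_half lerD2r ltrD2r.
Qed.

Lemma in_dyadic_gt (k m : nat) s : (2 ^ k < m)%N -> s < 1 ->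
  in_dyadic k m s = false.
Proof.
move=> km s1; apply/negbTE; rewrite /in_dyadic negb_and -ltNge; apply/orP; left.
apply: (lt_le_trans s1); rewrite ler_pdivlMr ?pow2_gt0 // mul1r lerBrDr -natrX.
by rewrite natr1 ler_nat.
Qed.

Lemma in_dyadic_contrR_low (k m : nat) s : (m <= 2 ^ k)%N -> 0 <= s ->
  in_dyadic k.+1 m ((s + 1) / 2) = false.
Proof.
move=> km s0; have e : m%:R / 2 ^+ k.+1 = (m%:R / 2 ^+ k) / 2 :> R.
  by rewrite exprS; field; rewrite gt_eqF ?pow2_gt0.
have m1 : m%:R / 2 ^+ k <= 1 :> R.
  by rewrite ler_pdivrMr ?pow2_gt0 // mul1r -natrX ler_nat.
by apply/negbTE; rewrite /in_dyadic e ltr_half negb_and -leNgt; apply/orP; right; lra.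
Qed.

Lemma haar_contrL (k j : nat) s : (0 < k)%N ->
  haar k.+1 j (s / 2) = Num.sqrt 2 * haar k j s.
Proof.
case: k => // k _.
rewrite /haar !in_dyadic_contrL !subSS !subn0 exprS sqrtrM //.
by case: ifP => _; [|case: ifP => _]; rewrite ?mulrN ?mulr0.
Qed.

Lemma haar_contrR (k j : nat) s : (0 < k)%N -> (0 < j)%N ->
  haar k.+1 (j + 2 ^ (k - 1)) ((s + 1) / 2) = Num.sqrt 2 * haar k j s.
Proof.
case: k => // k _ j0; rewrite /haar subSS subn0.
have -> : (2 * (j + 2 ^ k) - 1 = (2 * j - 1) + 2 ^ k.+1)%N by rewrite expnS; lia.
have -> : (2 * (j + 2 ^ k) = 2 * j + 2 ^ k.+1)%N by rewrite expnS; lia.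
rewrite !in_dyadic_contrR !subSS !subn0 exprS sqrtrM //.
by case: ifP => _; [|case: ifP => _]; rewrite ?mulrN ?mulr0.
Qed.

Lemma haar_gt (k j : nat) s : (2 ^ k < j)%N -> s < 1 -> haar k.+1 j s = 0.
Proof. by move=> kj s1; rewrite /haar !in_dyadic_gt // expnS; lia. Qed.

Lemma haar_contrR_low (k j : nat) s : (0 < k)%N -> (j <= 2 ^ (k - 1))%N -> 0 <= s ->
  haar k.+1 j ((s + 1) / 2) = 0.
Proof.
case: k => // k _; rewrite subSS subn0 => kj s0.
by rewrite /haar !in_dyadic_contrR_low // expnS; lia.
Qed.

Lemma haar11_contrL s : 0 <= s < 1 -> haar 1 1 (s / 2) = 1.
Proof.
move=> /andP[s0 s1]; rewrite /haar /in_dyadic /= expr1 expr0 sqrtr1 subrr mul0r.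
by rewrite divr_ge0 //= ltr_half s1.
Qed.

Lemma haar11_contrR s : 0 <= s < 1 -> haar 1 1 ((s + 1) / 2) = -1.
Proof.
move=> /andP[s0 s1]; rewrite /haar /in_dyadic /= expr1 expr0 sqrtr1 subrr mul0r.
have -> : (2%:R - 1 : R) = 1 by rewrite -natr1 addrK.
rewrite mul1r (_ : (2 * 1)%:R / 2 = 1 :> R) ?divff //.
have -> : ((s + 1) / 2 < 2^-1) = false by apply/negbTE; rewrite -leNgt; lra.
by rewrite andbF (_ : 2^-1 <= (s + 1) / 2 < 1) //; apply/andP; split; lra.
Qed.

End HaarSelfSimilarity.

Section DyadicTree.
Local Open Scope nat_scope.
Implicit Types (p q : nat * nat) (F : seq (nat * nat)).

(* The subtrees of [D] rooted at (2, 1) and (2, 2), each reindexed as a copy of [D]. *)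
Definition is_left p := (1 < p.1) && (p.2 <= 2 ^ (p.1 - 2)).
Definition is_right p := (1 < p.1) && (2 ^ (p.1 - 2) < p.2).
Definition attachL q := (q.1.+1, q.2).
Definition attachR q := (q.1.+1, q.2 + 2 ^ (q.1 - 1)).
Definition detachL p := (p.1.-1, p.2).
Definition detachR p := (p.1.-1, p.2 - 2 ^ (p.1 - 2)).
Definition subtreeL F := [seq detachL p | p <- F & is_left p].
Definition subtreeR F := [seq detachR p | p <- F & is_right p].

Lemma detachLK p : is_left p -> attachL (detachL p) = p.
Proof. by case: p => k j /andP[/= k1 _]; rewrite /attachL /= prednK // ltnW. Qed.

Lemma detachRK p : is_right p -> attachR (detachR p) = p.
Proof.
case: p => -[|[|k]] j //= /andP[_ kj].
by rewrite /attachR /detachR /= subnK // ltnW.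
Qed.

Lemma attachLK q : detachL (attachL q) = q.
Proof. by case: q. Qed.

Lemma attachRK q : detachR (attachR q) = q.
Proof. by case: q => k j; rewrite /attachR /detachR /= subSS addnK. Qed.

Lemma inD_detachL p : inD p -> is_left p -> inD (detachL p).
Proof.
case: p => -[|[|k]] j //; rewrite /inD /is_left /detachL /= !subSS !subn0; lia.
Qed.

Lemma inD_detachR p : inD p -> is_right p -> inD (detachR p).
Proof.
case: p => -[|[|k]] j //; rewrite /inD /is_right /detachR /= !subSS !subn0 expnS; lia.
Qed.

Lemma is_left_attachL q : inD q -> is_left (attachL q).
Proof. by case: q => -[|k] j //; rewrite /inD /is_left /= !subSS !subn0; lia. Qed.

Lemma is_right_attachR q : inD q -> is_right (attachR q).
Proof. by case: q => -[|k] j //; rewrite /inD /is_right /= !subSS !subn0; lia. Qed.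

Lemma mem_subtreeL F q : all inD F ->
  (q \in subtreeL F) = (attachL q \in F) && inD q.
Proof.
move=> /allP Fi; apply/mapP/andP => [[p] | [qF qi]].
  by rewrite mem_filter => /andP[pl pF] ->; rewrite detachLK // inD_detachL ?Fi.
by exists (attachL q); rewrite ?attachLK // mem_filter is_left_attachL.
Qed.

Lemma mem_subtreeR F q : all inD F ->
  (q \in subtreeR F) = (attachR q \in F) && inD q.
Proof.
move=> /allP Fi; apply/mapP/andP => [[p] | [qF qi]].
  by rewrite mem_filter => /andP[pr pF] ->; rewrite detachRK // inD_detachR ?Fi.
by exists (attachR q); rewrite ?attachRK // mem_filter is_right_attachR.
Qed.

Lemma subtreeL_uniq F : uniq F -> uniq (subtreeL F).
Proof.
move=> uF; rewrite map_inj_in_uniq ?filter_uniq // => p p'.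
rewrite !mem_filter => /andP[pl _] /andP[pl' _] e.
by rewrite -(detachLK pl) -(detachLK pl') e.
Qed.

Lemma subtreeR_uniq F : uniq F -> uniq (subtreeR F).
Proof.
move=> uF; rewrite map_inj_in_uniq ?filter_uniq // => p p'.
rewrite !mem_filter => /andP[pr _] /andP[pr' _] e.
by rewrite -(detachRK pr) -(detachRK pr') e.
Qed.

Lemma subtreeL_inD F : all inD F -> all inD (subtreeL F).
Proof. by move=> Fi; apply/allP => q; rewrite mem_subtreeL // => /andP[]. Qed.

Lemma subtreeR_inD F : all inD F -> all inD (subtreeR F).
Proof. by move=> Fi; apply/allP => q; rewrite mem_subtreeR // => /andP[]. Qed.

Lemma neq11_is_left p : is_left p -> p != (1, 1).
Proof. by case: p => k j /andP[k1 _]; apply/eqP => -[k1']; move: k1; rewrite k1'. Qed.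

Lemma inD_is_right p : inD p -> (p != (1, 1)) && ~~ is_left p = is_right p.
Proof.
case: p => -[|[|k]] j //; rewrite /inD /is_left /is_right /= ?subSS ?subn0 => h.
  by apply/negbTE; rewrite negb_and negbK; apply/orP; left; apply/eqP; congr pair; lia.
by rewrite -ltnNge.
Qed.

Lemma big_tree_split (V : Type) (idx : V) (op : Monoid.com_law idx) F
    (f : nat * nat -> V) : uniq F -> all inD F ->
  \big[op/idx]_(p <- F) f p =
  op (if (1, 1) \in F then f (1, 1) else idx)
     (op (\big[op/idx]_(q <- subtreeL F) f (attachL q))
         (\big[op/idx]_(q <- subtreeR F) f (attachR q))).
Proof.
move=> uF /allP Fi; rewrite (bigID (pred1 (1, 1))) /= big_pred1_uniq //.
congr (op _ _); rewrite (bigID is_left) /=; congr (op _ _).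
  rewrite big_map big_filter; apply: eq_big => [p|p /andP[_ pl]].
    by case: (boolP (is_left p)) => [/neq11_is_left ->|]; rewrite ?andbF.
  by rewrite detachLK.
rewrite big_map big_filter big_seq_cond [RHS]big_seq_cond.
apply: eq_big => [p|p /andP[/Fi pi pr]]; last by rewrite detachRK // -inD_is_right.
by case: (boolP (p \in F)) => //= /Fi /inD_is_right.
Qed.

Lemma mem_Dmn m n p :
  (p \in Dmn m n) = (m <= p.1 <= n) && (1 <= p.2 <= 2 ^ (p.1 - 1)).
Proof.
case: p => k j /=; apply/flattenP/idP.
  by move=> [s /mapP[k' hk ->] /mapP[j' hj [-> ->]]]; move: hk hj; rewrite !mem_iota; lia.
move=> h; exists [seq (k, j0) | j0 <- iota 1 (2 ^ (k - 1))].
  by apply/mapP; exists k => //; rewrite mem_iota; lia.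
by apply/mapP; exists j => //; rewrite mem_iota; lia.
Qed.

Lemma Dmn_uniq m n : uniq (Dmn m n).
Proof.
apply: allpairs_uniq_dep => [|k _|[k1 j1] [k2 j2] _ _ /= [ek ej]]; rewrite ?iota_uniq //.
by subst k2; rewrite /= in ej *; subst j2.
Qed.

Lemma Dmn_inD n : all inD (Dmn 1 n).
Proof. by apply/allP => -[k j]; rewrite mem_Dmn /inD /=; lia. Qed.

Lemma root_in_Dmn n : (1, 1) \in Dmn 1 n.+1.
Proof. by rewrite mem_Dmn /= expn0; lia. Qed.

Lemma subtreeL_Dmn n : perm_eq (subtreeL (Dmn 1 n.+1)) (Dmn 1 n).
Proof.
apply: uniq_perm; rewrite ?subtreeL_uniq ?Dmn_uniq // => -[k j].
rewrite mem_subtreeL ?Dmn_inD // !mem_Dmn /inD /=.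
by case: k => [|k] //=; rewrite !subSS !subn0 ?expnS; lia.
Qed.

Lemma subtreeR_Dmn n : perm_eq (subtreeR (Dmn 1 n.+1)) (Dmn 1 n).
Proof.
apply: uniq_perm; rewrite ?subtreeR_uniq ?Dmn_uniq // => -[k j].
rewrite mem_subtreeR ?Dmn_inD // !mem_Dmn /inD /=.
by case: k => [|k] //=; rewrite !subSS !subn0 ?expnS; lia.
Qed.

End DyadicTree.

Section Branches.
Variable R : realType.
Implicit Types (s t : R) (q : nat * nat) (F : seq (nat * nat)).

Lemma in_branch11 t : 0 <= t < 1 -> in_branch t (1, 1)%N.
Proof. by rewrite /in_branch /in_dyadic /= expr0 !divr1 subrr. Qed.

Lemma in_branch_attachL_contrL s q : inD q ->
  in_branch (s / 2) (attachL q) = in_branch s q.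
Proof.
case: q => -[|k] j //; rewrite /in_branch /inD /= !subSS !subn0 => qi.
by rewrite in_dyadic_contrL qi; move: qi; rewrite expnS; lia.
Qed.

Lemma in_branch_attachR_contrR s q : inD q ->
  in_branch ((s + 1) / 2) (attachR q) = in_branch s q.
Proof.
case: q => -[|k] j //; rewrite /in_branch /inD /= !subSS !subn0 => qi.
by rewrite in_dyadic_contrR qi; move: qi; rewrite expnS; lia.
Qed.

Lemma in_branch_attachR_contrL s q : inD q -> s < 1 ->
  in_branch (s / 2) (attachR q) = false.
Proof.
case: q => -[|k] j //; rewrite /in_branch /inD /= !subSS !subn0 => qi s1.
by rewrite in_dyadic_contrL in_dyadic_gt ?andbF //; lia.
Qed.

Lemma in_branch_attachL_contrR s q : inD q -> 0 <= s ->
  in_branch ((s + 1) / 2) (attachL q) = false.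
Proof.
case: q => -[|k] j //; rewrite /in_branch /inD /= !subSS !subn0 => qi s0.
by rewrite in_dyadic_contrR_low ?andbF //; lia.
Qed.

Lemma count_branch_contrL F s : uniq F -> all inD F -> 0 <= s < 1 ->
  count (in_branch (s / 2)) F = (((1, 1)%N \in F) + count (in_branch s) (subtreeL F))%N.
Proof.
move=> uF Fi s01; rewrite !count_sum_nat big_tree_split //= in_branch11 ?contrL_itv //.
rewrite [X in (_ + (_ + X))%N]big1_seq => [|q]; last first.
  rewrite mem_subtreeR // => /and3P[_ _ qi].
  by rewrite in_branch_attachR_contrL //; case/andP: s01.
rewrite addn0; congr addn.
rewrite big_seq [RHS]big_seq; apply: eq_bigr => q.
by rewrite mem_subtreeL // => /andP[_ qi]; rewrite in_branch_attachL_contrL.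
Qed.

Lemma count_branch_contrR F s : uniq F -> all inD F -> 0 <= s < 1 ->
  count (in_branch ((s + 1) / 2)) F =
  (((1, 1)%N \in F) + count (in_branch s) (subtreeR F))%N.
Proof.
move=> uF Fi s01; rewrite !count_sum_nat big_tree_split //= in_branch11 ?contrR_itv //.
rewrite [X in (_ + (X + _))%N]big1_seq => [|q]; last first.
  rewrite mem_subtreeL // => /and3P[_ _ qi].
  by rewrite in_branch_attachL_contrR //; case/andP: s01.
rewrite add0n; congr addn.
rewrite big_seq [RHS]big_seq; apply: eq_bigr => q.
by rewrite mem_subtreeR // => /andP[_ qi]; rewrite in_branch_attachR_contrR.
Qed.

End Branches.

Section HaarEnergy.
Variables (R : realType) (X Y : normedModType R) (T : {linear X -> Y}).
Implicit Types (s : R) (F : seq (nat * nat)) (x : nat * nat -> X) (v : Y).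

Definition haar_energy (N : nat) F x v : R :=
  (\sum_(i < 2 ^ N) `|v + haar_sum T F x (i%:R / 2 ^+ N)| ^+ 2) / 2 ^+ N.

Definition coef_energy F x : R := \sum_(p <- F) `|x p| ^+ 2.

Definition coefL x q : X := Num.sqrt 2 *: x (attachL q).
Definition coefR x q : X := Num.sqrt 2 *: x (attachR q).

Definition root_term F x : Y := if (1, 1)%N \in F then T (x (1, 1)%N) else 0.

Lemma haar_sum_contrL F x v s : uniq F -> all inD F -> 0 <= s < 1 ->
  v + haar_sum T F x (s / 2) = v + root_term F x + haar_sum T (subtreeL F) (coefL x) s.
Proof.
move=> uF Fi s01; rewrite /haar_sum big_tree_split //=.
rewrite [X in _ + (_ + (_ + X))]big1_seq ?addr0 => [|q]; last first.
  rewrite mem_subtreeR // => /and3P[_ _ /and3P[q0 j0 _]].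
  rewrite /= haar_contrL // -{1}(subnK q0) addn1 haar_gt ?mulr0 ?scale0r //; first lia.
  by case/andP: s01.
rewrite addrA; congr (_ + _ + _).
  by rewrite /root_term; case: ifP => // _; rewrite haar11_contrL // scale1r.
apply: eq_big_seq => q; rewrite mem_subtreeL // => /andP[_ /and3P[q0 _ _]].
by rewrite /= haar_contrL // /coefL linearZ /= scalerA mulrC.
Qed.

Lemma haar_sum_contrR F x v s : uniq F -> all inD F -> 0 <= s < 1 ->
  v + haar_sum T F x ((s + 1) / 2) =
  v - root_term F x + haar_sum T (subtreeR F) (coefR x) s.
Proof.
move=> uF Fi s01; rewrite /haar_sum big_tree_split //=.
rewrite [X in _ + (_ + (X + _))]big1_seq ?add0r => [|q]; last first.
  rewrite mem_subtreeL // => /and3P[_ _ /and3P[q0 _ qj]].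
  by rewrite /= haar_contrR_low ?scale0r //; case/andP: s01.
rewrite addrA; congr (_ + _ + _).
  rewrite /root_term; case: ifP => _; last by rewrite oppr0.
  by rewrite haar11_contrR // scaleN1r.
apply: eq_big_seq => q; rewrite mem_subtreeR // => /andP[_ /and3P[q0 j0 _]].
by rewrite /= haar_contrR // /coefR linearZ /= scalerA mulrC.
Qed.

Lemma dyadic_point_itv (N : nat) (i : 'I_(2 ^ N)) : 0 <= (i%:R / 2 ^+ N : R) < 1.
Proof.
have p := pow2_gt0 R N.
by rewrite divr_ge0 ?ler0n ?ltW //= ltr_pdivrMr // mul1r -natrX ltr_nat.
Qed.

Lemma haar_energy_split N F x v : uniq F -> all inD F ->
  haar_energy N.+1 F x v =
  (haar_energy N (subtreeL F) (coefL x) (v + root_term F x) +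
   haar_energy N (subtreeR F) (coefR x) (v - root_term F x)) / 2.
Proof.
move=> uF Fi; have p := pow2_gt0 R N.
rewrite /haar_energy expnS mul2n -addnn big_split_ord /=.
have halfL (i : 'I_(2 ^ N)) : (lshift (2 ^ N) i)%:R / 2 ^+ N.+1 = i%:R / 2 ^+ N / 2 :> R.
  by rewrite /= exprS; field; rewrite gt_eqF.
have halfR (i : 'I_(2 ^ N)) :
    (rshift (2 ^ N) i)%:R / 2 ^+ N.+1 = (i%:R / 2 ^+ N + 1) / 2 :> R.
  by rewrite /= natrD natrX exprS; field; rewrite gt_eqF.
under eq_bigr do rewrite halfL haar_sum_contrL ?dyadic_point_itv //.
under [X in _ + X]eq_bigr do rewrite halfR haar_sum_contrR ?dyadic_point_itv //.
by rewrite exprS; field; rewrite gt_eqF.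
Qed.

Lemma coef_energy_split F x : uniq F -> all inD F ->
  coef_energy F x =
  (if (1, 1)%N \in F then `|x (1, 1)%N| ^+ 2 else 0) +
  (coef_energy (subtreeL F) (coefL x) + coef_energy (subtreeR F) (coefR x)) / 2.
Proof.
move=> uF Fi; have e y : `|Num.sqrt 2 *: y| ^+ 2 / 2 = `|y| ^+ 2 :> R.
  by rewrite normrZ exprMn ger0_norm ?sqrtr_ge0 // sqr_sqrtr // mulrAC divff ?mul1r.
rewrite /coef_energy big_tree_split //= mulrDl !mulr_suml.
by congr (_ + (_ + _)); apply: eq_bigr => q _; rewrite e.
Qed.

Lemma eq_haar_energy N F x x' v : {in F, x =1 x'} ->
  haar_energy N F x v = haar_energy N F x' v.
Proof.
move=> xx'; rewrite /haar_energy /haar_sum; congr (_ / _); apply: eq_bigr => i _.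
by congr (`|_ + _| ^+ 2); apply: eq_big_seq => p /xx' ->.
Qed.

Lemma perm_haar_energy N F F' x v : perm_eq F F' ->
  haar_energy N F x v = haar_energy N F' x v.
Proof.
by move=> FF'; rewrite /haar_energy /haar_sum; under eq_bigr do rewrite (perm_big _ FF').
Qed.

Lemma eq_coef_energy F x x' : {in F, x =1 x'} -> coef_energy F x = coef_energy F x'.
Proof. by move=> xx'; apply: eq_big_seq => p /xx' ->. Qed.

Lemma perm_coef_energy F F' x : perm_eq F F' -> coef_energy F x = coef_energy F' x.
Proof. exact: perm_big. Qed.

Lemma haar_energy_sum0 N F x v : (forall t, haar_sum T F x t = 0) ->
  haar_energy N F x v = `|v| ^+ 2.
Proof.
move=> h0; rewrite /haar_energy; under eq_bigr do rewrite h0 addr0.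
rewrite sumr_const card_ord -[_ *+ _]mulr_natr natrX.
by field; rewrite gt_eqF ?pow2_gt0.
Qed.

End HaarEnergy.

Section Graft.
Variables (R : realType) (X Y : normedModType R) (T : {linear X -> Y}).

Definition graft (y : X) (a b : nat * nat -> X) (q : nat * nat) : X :=
  if q.1 == 1%N then y
  else if is_left q then (Num.sqrt (2 : R))^-1 *: a (detachL q)
  else (Num.sqrt (2 : R))^-1 *: b (detachR q).

Lemma sqrt2_neq0 : Num.sqrt (2 : R) != 0.
Proof. by rewrite sqrtr_eq0 -ltNge. Qed.

Lemma coefL_graft n y a b : {in Dmn 1 n, coefL (graft y a b) =1 a}.
Proof.
move=> [[|k] j]; rewrite mem_Dmn /coefL /graft /is_left //= !subSS !subn0 => kj.
have -> : (j <= 2 ^ k)%N by lia.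
by rewrite scalerA divff ?sqrt2_neq0 // scale1r.
Qed.

Lemma coefR_graft n y a b : {in Dmn 1 n, coefR (graft y a b) =1 b}.
Proof.
move=> [[|k] j]; rewrite mem_Dmn /coefR /graft /is_left //= !subSS !subn0 => kj.
have -> : (j + 2 ^ k <= 2 ^ k)%N = false by lia.
by rewrite attachRK scalerA divff ?sqrt2_neq0 // scale1r.
Qed.

Lemma haar_energy_graft n y a b v :
  haar_energy T n.+1 (Dmn 1 n.+1) (graft y a b) v =
  (haar_energy T n (Dmn 1 n) a (v + T y) + haar_energy T n (Dmn 1 n) b (v - T y)) / 2.
Proof.
rewrite haar_energy_split ?Dmn_uniq ?Dmn_inD // /root_term root_in_Dmn.
rewrite (perm_haar_energy _ _ _ _ (subtreeL_Dmn n)).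
rewrite (perm_haar_energy _ _ _ _ (subtreeR_Dmn n)).
by rewrite (eq_haar_energy _ _ _ (coefL_graft y a b)) (eq_haar_energy _ _ _ (coefR_graft y a b)).
Qed.

Lemma coef_energy_graft n y a b :
  coef_energy (Dmn 1 n.+1) (graft y a b) =
  `|y| ^+ 2 + (coef_energy (Dmn 1 n) a + coef_energy (Dmn 1 n) b) / 2.
Proof.
rewrite coef_energy_split ?Dmn_uniq ?Dmn_inD // root_in_Dmn.
rewrite (perm_coef_energy _ (subtreeL_Dmn n)) (perm_coef_energy _ (subtreeR_Dmn n)).
by rewrite (eq_coef_energy (coefL_graft y a b)) (eq_coef_energy (coefR_graft y a b)).
Qed.

End Graft.

Section Mixture.
Variables (R : realType) (X Y : normedModType R) (T : {linear X -> Y}).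
Implicit Types (F : seq (nat * nat)) (x : nat * nat -> X).

Definition mixture_Dmn (N n : nat) F x : Prop :=
  exists fam : seq (R * (nat * nat -> X)),
    [/\ all (fun a => 0 <= a.1) fam, \sum_(a <- fam) a.1 = 1,
        forall v,
          haar_energy T N F x v = \sum_(a <- fam) a.1 * haar_energy T n (Dmn 1 n) a.2 v &
        coef_energy F x = \sum_(a <- fam) a.1 * coef_energy (Dmn 1 n) a.2].

Lemma mixture_Dmn_nil N n x : mixture_Dmn N n [::] x.
Proof.
exists [:: (1, fun=> 0)]; split => [||v|]; rewrite ?big_seq1 ?mul1r /= ?ler01 //.
  rewrite !haar_energy_sum0 // => t; rewrite /haar_sum ?big_nil // big1 // => p _.
  by rewrite linear0 scaler0.
by rewrite /coef_energy big_nil big1 // => p _; rewrite normr0 expr0n.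
Qed.

Lemma mixture_Dmn_root N n F x : uniq F -> all inD F -> (1, 1)%N \in F ->
  mixture_Dmn N n (subtreeL F) (coefL x) -> mixture_Dmn N n (subtreeR F) (coefR x) ->
  mixture_Dmn N.+1 n.+1 F x.
Proof.
move=> uF Fi F11 [famL [L0 L1 LH LC]] [famR [R0 R1 RH RC]].
exists [seq (a.1 * b.1, graft (x (1, 1)%N) a.2 b.2) | a <- famL, b <- famR]; split.
- apply/allP => _ /allpairsP[[a b] [aL bR ->]] /=.
  by rewrite mulr_ge0 //; [exact: (allP L0) | exact: (allP R0)].
- rewrite big_allpairs_dep -[RHS]L1; apply: eq_bigr => a _.
  by rewrite -mulr_sumr R1 mulr1.
- move=> v; rewrite haar_energy_split // /root_term F11 LH RH big_allpairs_dep /=.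
  under [RHS]eq_bigr do under eq_bigr do rewrite haar_energy_graft.
  by rewrite (convex_sum_pairs (fun a => haar_energy T n (Dmn 1 n) a.2 _)
                               (fun b => haar_energy T n (Dmn 1 n) b.2 _) L1 R1).
rewrite coef_energy_split // F11 LC RC big_allpairs_dep /=.
set c := `|x (1, 1)%N| ^+ 2.
have e P Q : c + (P + Q) / 2 = ((P + c) + (Q + c)) / 2 :> R by field.
under [RHS]eq_bigr do under eq_bigr do rewrite coef_energy_graft -/c e.
rewrite (convex_sum_pairs (fun a => coef_energy (Dmn 1 n) a.2 + c)
                          (fun b => coef_energy (Dmn 1 n) b.2 + c) L1 R1).
by rewrite !convex_sumDr //; field.
Qed.

Lemma mixture_Dmn_noroot N n F x : uniq F -> all inD F -> (1, 1)%N \notin F ->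
  mixture_Dmn N n (subtreeL F) (coefL x) -> mixture_Dmn N n (subtreeR F) (coefR x) ->
  mixture_Dmn N.+1 n F x.
Proof.
move=> uF Fi F11 [famL [L0 L1 LH LC]] [famR [R0 R1 RH RC]].
exists ([seq (a.1 / 2, a.2) | a <- famL] ++ [seq (b.1 / 2, b.2) | b <- famR]); split.
- rewrite all_cat !all_map; apply/andP; split; apply/allP => a ha /=;
    rewrite divr_ge0 //; [exact: (allP L0) | exact: (allP R0)].
- by rewrite big_cat !big_map /= -!mulr_suml L1 R1; field.
- move=> v; rewrite haar_energy_split // /root_term (negbTE F11) addr0 subr0 LH RH.
  rewrite big_cat !big_map /= mulrDl !mulr_suml.
  by congr (_ + _); apply: eq_bigr => a _; rewrite mulrAC.
rewrite coef_energy_split // (negbTE F11) add0r LC RC big_cat !big_map /= mulrDl !mulr_suml.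
by congr (_ + _); apply: eq_bigr => a _; rewrite mulrAC.
Qed.

Lemma mixture_Dmn_of_height N : forall n F x, uniq F -> all inD F ->
  (forall p, p \in F -> p.1 <= N)%N ->
  (forall s : R, 0 <= s < 1 -> (count (in_branch s) F <= n)%N) ->
  mixture_Dmn N n F x.
Proof.
elim: N => [|N IH] n F x uF Fi FN Fn.
  case: F Fi FN {uF Fn} => [|p F] /= => [_ _|/andP[pi _] FN]; first exact: mixture_Dmn_nil.
  by have := FN p (mem_head _ _); move: pi; rewrite /inD; lia.
have uL := subtreeL_uniq uF; have uR := subtreeR_uniq uF.
have iL := subtreeL_inD Fi; have iR := subtreeR_inD Fi.
have NL q : q \in subtreeL F -> (q.1 <= N)%N.
  by rewrite mem_subtreeL // => /andP[/FN].
have NR q : q \in subtreeR F -> (q.1 <= N)%N.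
  by rewrite mem_subtreeR // => /andP[/FN].
have nL (s : R) : 0 <= s < 1 ->
    (((1, 1)%N \in F) + count (in_branch s) (subtreeL F) <= n)%N.
  by move=> s01; rewrite -count_branch_contrL //; apply/Fn/contrL_itv.
have nR (s : R) : 0 <= s < 1 ->
    (((1, 1)%N \in F) + count (in_branch s) (subtreeR F) <= n)%N.
  by move=> s01; rewrite -count_branch_contrR //; apply/Fn/contrR_itv.
case: (boolP ((1, 1)%N \in F)) => F11 in nL nR *.
  case: n Fn nL nR => [|n] Fn nL nR.
    have in01 : 0 <= (0 : R) < 1 by rewrite lexx ltr01.
    have := Fn 0 in01; rewrite leqNgt -has_count => /hasPn/(_ _ F11).
    by rewrite in_branch11.
  by apply: mixture_Dmn_root => //; apply: IH.
by apply: mixture_Dmn_noroot => //; apply: IH.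
Qed.

End Mixture.

Section HaarSumBound.
Variables (R : realType) (X Y : normedModType R) (T : {linear X -> Y}).
Implicit Types (F : seq (nat * nat)) (x : nat * nat -> X).

Lemma L2norm_haar_sum N F x : (forall p, p \in F -> p.1 <= N)%N ->
  L2norm (haar_sum T F x) = Num.sqrt (haar_energy T N F x 0).
Proof.
move=> FN; rewrite /L2norm (@integral_dyadic_step R N (fun t => `|haar_sum T F x t| ^+ 2)).
- by rewrite /haar_energy; under [in RHS]eq_bigr do rewrite add0r.
- by move=> t; rewrite exprn_ge0.
move=> i t it ti; congr (`|_| ^+ 2); apply: eq_big_seq => p pF.
by rewrite (haar_atom_const _ (FN p pF) it ti).
Qed.

Lemma haar_sum_le_mixture N n F x c : tau_admissible T (Dmn 1 n) c ->
  (forall p, p \in F -> p.1 <= N)%N -> mixture_Dmn T N n F x ->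
  L2norm (haar_sum T F x) <= c * Num.sqrt (coef_energy F x).
Proof.
move=> [c0 cD] FN [fam [fam0 _ famH famC]].
have C0 F' x' : 0 <= coef_energy F' x' by rewrite sumr_ge0 // => p _; rewrite exprn_ge0.
have Dn p : p \in Dmn 1 n -> (p.1 <= n)%N by rewrite mem_Dmn => /andP[/andP[_ ->]].
have famD a : haar_energy T n (Dmn 1 n) a.2 0 <= c ^+ 2 * coef_energy (Dmn 1 n) a.2.
  rewrite -ler_sqrt ?mulr_ge0 ?sqr_ge0 ?C0 // (sqrtrM _ (sqr_ge0 c)) sqrtr_sqr ger0_norm //.
  by rewrite -(L2norm_haar_sum a.2 Dn); exact: cD.
rewrite (L2norm_haar_sum x FN) famH famC -[c]ger0_norm // -sqrtr_sqr -sqrtrM ?sqr_ge0 //.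
rewrite ler_wsqrtr // mulr_sumr big_seq [X in _ <= X]big_seq; apply: ler_sum => a fa.
by rewrite [X in _ <= X]mulrCA ler_wpM2l //; exact: (allP fam0).
Qed.

End HaarSumBound.

Theorem theorem3p10 (R : realType) (F : seq (nat * nat)) (n : nat)
  (X Y : completeNormedModType R) (T : {linear X -> Y}) :
  uniq F -> all (@inD) F -> local_height_eq R F n ->
  (exists M : R, forall x : X, `|T x| <= M * `|x|) ->
  (tau T F <= tau T (Dmn 1 n))%E.
Proof.
move=> uF Fi [_ heightF] _.
apply: le_ereal_inf_tmp => _ [c admD <-]; apply: ereal_inf_lbound; exists c => //.
split=> [|x]; first by case: admD.
pose N := (\max_(p <- F) p.1)%N.
have FN p : p \in F -> (p.1 <= N)%N by move=> pF; exact: leq_bigmax_seq.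
exact: haar_sum_le_mixture admD FN (mixture_Dmn_of_height T x uF Fi FN heightF).
Qed.
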